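(* There is an algorithm that, given $x \in \mathbb{R}^z$ and $p =\big( (\min_1, \max_1),\dots, (\min_\ell, \max_\ell)\big) \in (\mathrm{set}(x)^2)^\ell$, runs in $O(z\ell)$ time and returns True if and only if there exists a traversal $T\in\mathcal{T}_{z,\ell}$ such that $p$ is the $\ell$-profile of $(x,T)$.
   Context: For $x=(x_1,\dots,x_z)\in\mathbb{R}^z$, $\mathrm{set}(x)=\{x_i:1\le i\le z\}$. A traversal between sequences of lengths $z$ and $\ell$ is a sequence of index pairs from $(1,1)$ to $(z,\ell)$ where each step increases each index by $0$ or $1$ and at least one index by $1$; $\mathcal{T}_{z,\ell}$ is the set of traversals. For $T\in\mathcal{T}_{z,\ell}$ the traversal sectors are $S_j^{(x,T)}=\{x_i:(i,j)\in T\}$, $j\in[\ell]$, and the $\ell$-profile of $(x,T)$ is $\big((\min S_j^{(x,T)},\max S_j^{(x,T)})\big)_{j=1}^{\ell}$. *)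

From Stdlib Require Import Reals List Arith Lia.
Import ListNotations.
Open Scope R_scope.

(** [x : list R] is x in R^z with z = length x; x_i is [nth i x 0]
    (index i in 0..z-1 corresponds to the paper's index i+1). *)

Definition set_of (x : list R) (y : R) : Prop := In y x.

Definition trav_step (a b : nat * nat) : Prop :=
  (fst b = fst a \/ fst b = S (fst a)) /\
  (snd b = snd a \/ snd b = S (snd a)) /\
  (fst b <> fst a \/ snd b <> snd a).

Fixpoint trav_steps (a : nat * nat) (T : list (nat * nat)) : Prop :=
  match T with
  | [] => True
  | b :: T' => trav_step a b /\ trav_steps b T'
  end.

Definition is_traversal (z l : nat) (T : list (nat * nat)) : Prop :=
  (0 < z)%nat /\ (0 < l)%nat /\
  match T with
  | [] => False
  | a :: T' => a = (0%nat, 0%nat) /\ trav_steps a T' /\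
               last T a = (Nat.pred z, Nat.pred l)
  end.

Definition sector (x : list R) (T : list (nat * nat)) (j : nat) (y : R) : Prop :=
  exists i, In (i, j) T /\ y = nth i x 0.

Definition is_min (S : R -> Prop) (m : R) : Prop := S m /\ forall y, S y -> m <= y.
Definition is_max (S : R -> Prop) (M : R) : Prop := S M /\ forall y, S y -> y <= M.

Definition is_profile (x : list R) (T : list (nat * nat)) (l : nat)
    (p : list (R * R)) : Prop :=
  length p = l /\
  forall j, (j < l)%nat ->
    is_min (sector x T j) (fst (nth j p (0, 0))) /\
    is_max (sector x T j) (snd (nth j p (0, 0))).

(** * Model of computation: a unit-cost real-RAM (while-language)

   Nat registers and a 2-D nat memory (unit-cost +, truncated -, =, <),
   real registers and a 2-D real memory (unit-cost +, -, *, =, <, constants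
   0 and 1; no floor or real->nat conversion). *)

Inductive nexp : Type :=
  | NConst (n : nat)
  | NVar (v : nat)
  | NAdd (a b : nexp)
  | NSub (a b : nexp)
  | NLenX
  | NLenP
  | NMem (a b : nexp).

Inductive rexp : Type :=
  | RZero | ROne
  | RVar (v : nat)
  | RAdd (a b : rexp) | RSub (a b : rexp) | RMul (a b : rexp)
  | RX (i : nexp)
  | RPmin (j : nexp)
  | RPmax (j : nexp)
  | RMem (a b : nexp).

Inductive bexp : Type :=
  | BTrue
  | BNot (b : bexp)
  | BAnd (b1 b2 : bexp)
  | BEqN (a b : nexp) | BLtN (a b : nexp)
  | BEqR (a b : rexp) | BLtR (a b : rexp).

Inductive cmd : Type :=
  | CSkip
  | CNAsgn (v : nat) (e : nexp)
  | CRAsgn (v : nat) (e : rexp)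
  | CNStore (a b : nexp) (e : nexp)
  | CRStore (a b : nexp) (e : rexp)
  | CSeq (c1 c2 : cmd)
  | CIf (b : bexp) (c1 c2 : cmd)
  | CWhile (b : bexp) (c : cmd).

Record state : Type := mkState {
  nvars : nat -> nat;
  rvars : nat -> R;
  nmem : nat -> nat -> nat;
  rmem : nat -> nat -> R }.

Definition init_state : state :=
  mkState (fun _ => 0%nat) (fun _ => 0) (fun _ _ => 0%nat) (fun _ _ => 0).

Section Eval.
Variables (x : list R) (p : list (R * R)).

Fixpoint neval (s : state) (e : nexp) : nat :=
  match e with
  | NConst n => n
  | NVar v => nvars s v
  | NAdd a b => (neval s a + neval s b)%nat
  | NSub a b => (neval s a - neval s b)%nat
  | NLenX => length x
  | NLenP => length p
  | NMem a b => nmem s (neval s a) (neval s b)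
  end.

Fixpoint reval (s : state) (e : rexp) : R :=
  match e with
  | RZero => 0
  | ROne => 1
  | RVar v => rvars s v
  | RAdd a b => reval s a + reval s b
  | RSub a b => reval s a - reval s b
  | RMul a b => reval s a * reval s b
  | RX i => nth (neval s i) x 0
  | RPmin j => fst (nth (neval s j) p (0, 0))
  | RPmax j => snd (nth (neval s j) p (0, 0))
  | RMem a b => rmem s (neval s a) (neval s b)
  end.

Fixpoint beval (s : state) (b : bexp) : bool :=
  match b with
  | BTrue => true
  | BNot b => negb (beval s b)
  | BAnd b1 b2 => andb (beval s b1) (beval s b2)
  | BEqN a c => Nat.eqb (neval s a) (neval s c)
  | BLtN a c => Nat.ltb (neval s a) (neval s c)
  | BEqR a c => if Req_EM_T (reval s a) (reval s c) then true else false
  | BLtR a c => if Rlt_dec (reval s a) (reval s c) then true else false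
  end.

Definition upd {A} (f : nat -> A) (v : nat) (a : A) : nat -> A :=
  fun w => if Nat.eqb w v then a else f w.

Definition upd2 {A} (f : nat -> nat -> A) (i j : nat) (a : A) : nat -> nat -> A :=
  fun i' j' => if andb (Nat.eqb i' i) (Nat.eqb j' j) then a else f i' j'.

(** [exec s c k s']: running c from state s terminates in state s'
    after exactly k unit-cost steps.  (The semantics is deterministic.) *)
Inductive exec : state -> cmd -> nat -> state -> Prop :=
  | ExSkip s : exec s CSkip 1 s
  | ExNAsgn s v e :
      exec s (CNAsgn v e) 1
        (mkState (upd (nvars s) v (neval s e)) (rvars s) (nmem s) (rmem s))
  | ExRAsgn s v e :
      exec s (CRAsgn v e) 1
        (mkState (nvars s) (upd (rvars s) v (reval s e)) (nmem s) (rmem s))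
  | ExNStore s a b e :
      exec s (CNStore a b e) 1
        (mkState (nvars s) (rvars s)
           (upd2 (nmem s) (neval s a) (neval s b) (neval s e)) (rmem s))
  | ExRStore s a b e :
      exec s (CRStore a b e) 1
        (mkState (nvars s) (rvars s) (nmem s)
           (upd2 (rmem s) (neval s a) (neval s b) (reval s e)))
  | ExSeq s c1 c2 k1 k2 s1 s2 :
      exec s c1 k1 s1 -> exec s1 c2 k2 s2 -> exec s (CSeq c1 c2) (k1 + k2) s2
  | ExIfT s b c1 c2 k s' :
      beval s b = true -> exec s c1 k s' -> exec s (CIf b c1 c2) (S k) s'
  | ExIfF s b c1 c2 k s' :
      beval s b = false -> exec s c2 k s' -> exec s (CIf b c1 c2) (S k) s'
  | ExWhileF s b c :
      beval s b = false -> exec s (CWhile b c) 1 s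
  | ExWhileT s b c k1 k2 s1 s2 :
      beval s b = true -> exec s c k1 s1 -> exec s1 (CWhile b c) k2 s2 ->
      exec s (CWhile b c) (S (k1 + k2)) s2.

End Eval.

Definition output (s : state) : bool := negb (Nat.eqb (nvars s 0) 0).

(* A traversal has profile p exactly when every cell (i, j) it visits satisfies
   pmin_j <= x_i <= pmax_j and, in every row j, it visits a cell with x_i = pmin_j
   and one with x_i = pmax_j.  Whether some staircase path from (0, 0) to
   (z-1, l-1) does so is decided by dynamic programming over the cells, scanned
   backwards from (z-1, l-1), with two flags recording whether pmin_j and pmax_j
   were already met earlier in the current row.  Each of the 4zl table entries is
   computed in constant time from the entries of the three successor cells, so
   the table is filled in O(zl) unit-cost steps. *)

From Stdlib Require Import Reals List Arith Lia Lra.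
Import ListNotations.
Open Scope R_scope.

Definition Reqb (u v : R) : bool := if Req_EM_T u v then true else false.

Lemma Reqb_true u v : Reqb u v = true <-> u = v.
Proof. unfold Reqb; destruct Req_EM_T; split; congruence. Qed.

Lemma last_cons_default {A} (e c : A) L : last (e :: L) c = last L e.
Proof.
  revert e c; induction L as [|f L IH]; intros e c; [reflexivity|].
  change (last (f :: L) c = last (f :: L) e); now rewrite !IH.
Qed.

Definition le_pair (c d : nat * nat) : Prop := (fst c <= fst d /\ snd c <= snd d)%nat.

Lemma trav_step_cases a b : trav_step a b ->
  b = (S (fst a), snd a) \/ b = (fst a, S (snd a)) \/ b = (S (fst a), S (snd a)).
Proof.
  destruct a as [i j], b as [i' j']; unfold trav_step; cbn.
  intros [[-> | ->] [[-> | ->] [H | H]]]; auto; congruence.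
Qed.

Lemma trav_step_le_pair a b : trav_step a b -> le_pair a b.
Proof.
  intros H; unfold le_pair.
  destruct (trav_step_cases a b H) as [-> | [-> | ->]]; cbn; lia.
Qed.

Lemma trav_steps_between c L d :
  trav_steps c L -> In d (c :: L) -> le_pair c d /\ le_pair d (last L c).
Proof.
  unfold le_pair; revert c d; induction L as [|e L IH]; intros c d HL Hd.
  - destruct Hd as [<- | []]; cbn; lia.
  - destruct HL as [Hce HL]; rewrite last_cons_default.
    pose proof (trav_step_le_pair _ _ Hce) as Hle; unfold le_pair in Hle.
    destruct Hd as [<- | Hd].
    + destruct (IH e e HL (or_introl eq_refl)); lia.
    + destruct (IH e d HL Hd); lia.
Qed.

(* The entry for [completes i j a b] (defined below) is held in [nmem (addr j a b) i],
   and is read as true iff it is nonzero. *)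
Definition bit (b : bool) : nat := if b then 1%nat else 0%nat.
Definition slot (a b : bool) : nat := bit a + bit a + bit b.
Definition addr (j : nat) (a b : bool) : nat := 4 * j + slot a b.

Lemma addr_inj j a b j' a' b' : addr j a b = addr j' a' b' -> j = j' /\ a = a' /\ b = b'.
Proof.
  unfold addr, slot, bit; intros H.
  destruct a, b, a', b'; (split; [lia |]); split; reflexivity || (exfalso; lia).
Qed.

Definition nonzero (e : nexp) : bexp := BNot (BEqN e (NConst 0)).
Definition Bor (b1 b2 : bexp) : bexp := BNot (BAnd (BNot b1) (BNot b2)).
Definition quad (e : nexp) : nexp := NAdd (NAdd e e) (NAdd e e).
Definition nsucc (e : nexp) : nexp := NAdd e (NConst 1).
Definition entry (row sl col : nexp) : nexp := NMem (NAdd (quad row) sl) col.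

Definition set_flag (r : nat) (b : bexp) : cmd :=
  CIf b (CNAsgn r (NConst 1)) (CNAsgn r (NConst 0)).
Definition store_flag (row col : nexp) (b : bexp) : cmd :=
  CIf b (CNStore row col (NConst 1)) (CNStore row col (NConst 0)).
Definition countdown (r : nat) (body : cmd) : cmd :=
  CWhile (BLtN (NConst 0) (NVar r)) (CSeq (CNAsgn r (NSub (NVar r) (NConst 1))) body).

Notation rI := 1%nat (only parsing).
Notation rJ := 2%nat (only parsing).
Notation rHitMin := 3%nat (only parsing).
Notation rHitMax := 4%nat (only parsing).

Definition flag_or (a : bool) (r : nat) : nexp := if a then NConst 1 else NVar r.

Definition admissible_test : bexp :=
  BAnd (BNot (BLtR (RX (NVar rI)) (RPmin (NVar rJ))))
       (BNot (BLtR (RPmax (NVar rJ)) (RX (NVar rI)))).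

Definition can_exit_test : bexp :=
  Bor (BAnd (BEqN (nsucc (NVar rI)) NLenX) (BEqN (nsucc (NVar rJ)) NLenP))
      (Bor (nonzero (entry (nsucc (NVar rJ)) (NConst 0) (NVar rI)))
           (nonzero (entry (nsucc (NVar rJ)) (NConst 0) (nsucc (NVar rI))))).

Definition completes_test (a b : bool) : bexp :=
  let A := flag_or a rHitMin in
  let B := flag_or b rHitMax in
  BAnd admissible_test
    (Bor (BAnd (BAnd (nonzero A) (nonzero B)) can_exit_test)
         (nonzero (entry (NVar rJ) (NAdd (NAdd A A) B) (nsucc (NVar rI))))).

Definition store_entry (a b : bool) : cmd :=
  store_flag (NAdd (quad (NVar rJ)) (NConst (slot a b))) (NVar rI) (completes_test a b).

Definition fill_cell : cmd :=
  CSeq (set_flag rHitMin (BEqR (RX (NVar rI)) (RPmin (NVar rJ))))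
  (CSeq (set_flag rHitMax (BEqR (RX (NVar rI)) (RPmax (NVar rJ))))
  (CSeq (store_entry false false) (CSeq (store_entry false true)
  (CSeq (store_entry true false) (store_entry true true))))).

Definition fill_row : cmd := countdown rI fill_cell.

Definition fill_table : cmd := countdown rJ (CSeq (CNAsgn rI NLenX) fill_row).

(* The test [0 < z] keeps the cost O(zl + 1): for z = 0 the row loop alone
   would take l steps. *)
Definition profile_checker : cmd :=
  CIf (BLtN (NConst 0) NLenX)
    (CSeq (CNAsgn rJ NLenP) (CSeq fill_table (CNAsgn 0 (entry (NConst 0) (NConst 0) (NConst 0)))))
    CSkip.

Section Semantics.

Variables (x : list R) (p : list (R * R)).
Local Notation exec := (exec x p).
Local Notation neval := (neval x p).
Local Notation beval := (beval x p).

Definition set_nvar (s : state) r n : state :=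
  mkState (upd (nvars s) r n) (rvars s) (nmem s) (rmem s).
Definition set_nmem (s : state) row col v : state :=
  mkState (nvars s) (rvars s) (upd2 (nmem s) row col v) (rmem s).

Lemma exec_set_flag s r b : exec s (set_flag r b) 2 (set_nvar s r (bit (beval s b))).
Proof. unfold set_flag; destruct (beval s b) eqn:E; constructor; auto; constructor. Qed.

Lemma exec_store_flag s row col b :
  exec s (store_flag row col b) 2 (set_nmem s (neval s row) (neval s col) (bit (beval s b))).
Proof. unfold store_flag; destruct (beval s b) eqn:E; constructor; auto; constructor. Qed.

Lemma exec_countdown r body k (P : nat -> state -> Prop) :
  (forall n s, P (S n) s ->
     exists s', exec (set_nvar s r n) body k s' /\ P n s' /\ nvars s' r = n) ->
  forall n s, P n s -> nvars s r = n ->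
  exists s', exec s (countdown r body) (n * S (S k) + 1) s' /\ P 0%nat s'.
Proof.
  intros Hbody; induction n as [| n IH]; intros s HP Hr.
  - exists s; split; [| exact HP].
    apply ExWhileF; cbn; now rewrite Hr.
  - destruct (Hbody n s HP) as (s1 & E1 & P1 & R1).
    destruct (IH s1 P1 R1) as (s2 & E2 & P2).
    exists s2; split; [| exact P2].
    replace (S n * S (S k) + 1)%nat with (S ((1 + k) + (n * S (S k) + 1))) by lia.
    apply ExWhileT with s1; [cbn; now rewrite Hr | | exact E2].
    apply ExSeq with (set_nvar s r n); [| exact E1].
    assert (Hdec : neval s (NSub (NVar r) (NConst 1)) = n) by (cbn; lia).
    unfold set_nvar; rewrite <- Hdec; apply ExNAsgn.
Qed.

Lemma beval_Bor s b1 b2 : beval s (Bor b1 b2) = (beval s b1 || beval s b2)%bool.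
Proof. cbn; now destruct (beval s b1), (beval s b2). Qed.

Lemma beval_nonzero s e : beval s (nonzero e) = true <-> neval s e <> 0%nat.
Proof. cbn; rewrite Bool.negb_true_iff; apply Nat.eqb_neq. Qed.

Lemma bit_nonzero b : bit b <> 0%nat <-> b = true.
Proof. destruct b; cbn; split; congruence. Qed.

Lemma neval_entry s row sl col :
  neval s (entry row sl col) = nmem s (4 * neval s row + neval s sl) (neval s col).
Proof. cbn; f_equal; lia. Qed.

Lemma neval_flag_or s a r h : nvars s r = bit h -> neval s (flag_or a r) = bit (a || h)%bool.
Proof. destruct a; cbn; auto. Qed.

End Semantics.

Section Correctness.

Variables (x : list R) (p : list (R * R)).
Local Notation z := (length x).
Local Notation l := (length p).

Definition xval i := nth i x 0.
Definition pmin j := fst (nth j p (0, 0)).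
Definition pmax j := snd (nth j p (0, 0)).
Definition admissible i j : Prop := pmin j <= xval i <= pmax j.
Definition seen (f : nat -> R) (a : bool) i j : bool := a || Reqb (xval i) (f j).

(* [completes i j a b]: some staircase path from (i, j) to (z-1, l-1) through
   admissible cells meets pmin_k and pmax_k in every row k > j, and meets pmin_j
   (resp. pmax_j) from (i, j) on unless [a] (resp. [b]) records that it was met
   earlier in row j. *)
Inductive completes : nat -> nat -> bool -> bool -> Prop :=
  | completes_end i j a b : admissible i j -> S i = z -> S j = l ->
      seen pmin a i j = true -> seen pmax b i j = true -> completes i j a b
  | completes_right i j a b : admissible i j ->
      completes (S i) j (seen pmin a i j) (seen pmax b i j) -> completes i j a b
  | completes_up i j a b : admissible i j ->
      seen pmin a i j = true -> seen pmax b i j = true ->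
      completes i (S j) false false -> completes i j a b
  | completes_diag i j a b : admissible i j ->
      seen pmin a i j = true -> seen pmax b i j = true ->
      completes (S i) (S j) false false -> completes i j a b.

Lemma completes_bounds i j a b : completes i j a b -> (i < z /\ j < l)%nat.
Proof. induction 1; lia. Qed.

Definition attained (T : list (nat * nat)) j v : Prop := exists i, In (i, j) T /\ xval i = v.

Definition covers (T : list (nat * nat)) (f : nat -> R) j0 (a : bool) : Prop :=
  forall j, (j0 <= j < l)%nat -> (j = j0 -> a = false) -> attained T j (f j).

Lemma covers_beyond T f j0 a : (l <= j0)%nat -> covers T f j0 a.
Proof. intros H j Hj; lia. Qed.

Lemma attained_cons c T j v : attained T j v -> attained (c :: T) j v.
Proof. intros [i [Hi V]]; exists i; split; [right|]; assumption. Qed.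

Lemma covers_cons_same_row T f i j a :
  covers T f j (seen f a i j) -> covers ((i, j) :: T) f j a.
Proof.
  intros H j' Hj' Ha.
  destruct (Nat.eq_dec j' j) as [-> | Hne].
  - specialize (Ha eq_refl); subst a.
    destruct (Reqb (xval i) (f j)) eqn:E.
    + exists i; split; [now left | now apply Reqb_true].
    + apply attained_cons, H; [lia | intros _; exact E].
  - apply attained_cons, H; [lia | intros; contradiction].
Qed.

Lemma covers_cons_next_row T f i j a :
  seen f a i j = true -> covers T f (S j) false -> covers ((i, j) :: T) f j a.
Proof.
  intros Hs H j' Hj' Ha.
  destruct (Nat.eq_dec j' j) as [-> | Hne].
  - specialize (Ha eq_refl); subst a.
    exists i; split; [now left | now apply Reqb_true].
  - apply attained_cons, H; [lia | intros; reflexivity].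
Qed.

Lemma covers_tail_same_row T f i j a :
  covers ((i, j) :: T) f j a -> covers T f j (seen f a i j).
Proof.
  intros H j' Hj' Hs.
  assert (Hfl : j' = j -> a = false /\ Reqb (xval i) (f j) = false)
    by (intros Ej; apply Bool.orb_false_elim, Hs, Ej).
  destruct (H j' Hj' (fun Ej => proj1 (Hfl Ej))) as [i' [[E | Hi'] V]].
  - injection E as <- <-.
    apply Reqb_true in V; rewrite (proj2 (Hfl eq_refl)) in V; discriminate.
  - exists i'; split; assumption.
Qed.

Lemma covers_tail_next_row T f i j a : (j < l)%nat ->
  (forall d, In d T -> (S j <= snd d)%nat) ->
  covers ((i, j) :: T) f j a -> seen f a i j = true /\ covers T f (S j) false.
Proof.
  intros Hj Hrows H; split.
  - destruct a; [reflexivity|].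
    destruct (H j ltac:(lia) (fun _ => eq_refl)) as [i' [[E | Hi'] V]].
    + injection E as <-; now apply Reqb_true.
    + specialize (Hrows _ Hi'); cbn in Hrows; lia.
  - intros j' Hj' _.
    destruct (H j' ltac:(lia) ltac:(intros; lia)) as [i' [[E | Hi'] V]].
    + injection E as _ <-; lia.
    + exists i'; split; assumption.
Qed.

Definition completion (c : nat * nat) (L : list (nat * nat)) (a b : bool) : Prop :=
  trav_steps c L /\ last L c = (pred z, pred l) /\
  (forall d, In d (c :: L) -> admissible (fst d) (snd d)) /\
  covers (c :: L) pmin (snd c) a /\ covers (c :: L) pmax (snd c) b.

Lemma completion_cons_same_row i j L a b : admissible i j ->
  completion (S i, j) L (seen pmin a i j) (seen pmax b i j) ->
  completion (i, j) ((S i, j) :: L) a b.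
Proof.
  intros Hadm (Hst & Hlast & Hall & Hmin & Hmax).
  split; [split; [unfold trav_step; cbn; lia | exact Hst] |].
  split; [now rewrite last_cons_default |].
  split; [intros d [<- | Hd]; [exact Hadm | now apply Hall] |].
  split; now apply covers_cons_same_row.
Qed.

Lemma completion_cons_next_row i j c L a b :
  trav_step (i, j) c -> snd c = S j -> admissible i j ->
  seen pmin a i j = true -> seen pmax b i j = true ->
  completion c L false false -> completion (i, j) (c :: L) a b.
Proof.
  intros Hstep Hc Hadm Ha Hb (Hst & Hlast & Hall & Hmin & Hmax).
  rewrite Hc in Hmin, Hmax.
  split; [split; assumption |].
  split; [now rewrite last_cons_default |].
  split; [intros d [<- | Hd]; [exact Hadm | now apply Hall] |].
  split; now apply covers_cons_next_row.
Qed.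

Lemma completes_completion i j a b :
  completes i j a b -> exists L, completion (i, j) L a b.
Proof.
  induction 1 as [i j a b Hadm Hi Hj Ha Hb | i j a b Hadm _ [L HL]
                 | i j a b Hadm Ha Hb _ [L HL] | i j a b Hadm Ha Hb _ [L HL]].
  - exists []; split; [exact I |].
    split; [cbn; f_equal; lia |].
    split; [intros d [<- | []]; exact Hadm |].
    split; apply covers_cons_next_row; auto; apply covers_beyond; cbn; lia.
  - exists ((S i, j) :: L); now apply completion_cons_same_row.
  - exists ((i, S j) :: L); apply completion_cons_next_row; auto.
    unfold trav_step; cbn; lia.
  - exists ((S i, S j) :: L); apply completion_cons_next_row; auto.
    unfold trav_step; cbn; lia.
Qed.

Lemma completion_row_bound c L a b : (0 < l)%nat -> completion c L a b -> (snd c < l)%nat.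
Proof.
  intros Hl (Hst & Hlast & _).
  destruct (trav_steps_between c L c Hst (or_introl eq_refl)) as [_ [_ H]].
  rewrite Hlast in H; cbn in H; lia.
Qed.

Lemma completion_tail_same_row i j L a b :
  completion (i, j) ((S i, j) :: L) a b ->
  completion (S i, j) L (seen pmin a i j) (seen pmax b i j).
Proof.
  intros ([_ Hst] & Hlast & Hall & Hmin & Hmax).
  split; [exact Hst |].
  split; [now rewrite last_cons_default in Hlast |].
  split; [intros d Hd; apply Hall; now right |].
  split; now apply covers_tail_same_row.
Qed.

Lemma completion_tail_next_row i j c L a b : (0 < l)%nat -> snd c = S j ->
  completion (i, j) (c :: L) a b ->
  seen pmin a i j = true /\ seen pmax b i j = true /\ completion c L false false.
Proof.
  intros Hl Hc HC.
  pose proof (completion_row_bound _ _ _ _ Hl HC) as Hj; cbn in Hj.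
  destruct HC as ([_ Hst] & Hlast & Hall & Hmin & Hmax).
  assert (Hrows : forall d, In d (c :: L) -> (S j <= snd d)%nat).
  { intros d Hd; destruct (trav_steps_between c L d Hst Hd) as [[_ H] _]; lia. }
  destruct (covers_tail_next_row _ _ _ _ _ Hj Hrows Hmin) as [Ha Hmin'].
  destruct (covers_tail_next_row _ _ _ _ _ Hj Hrows Hmax) as [Hb Hmax'].
  split; [exact Ha |]; split; [exact Hb |].
  split; [exact Hst |].
  split; [now rewrite last_cons_default in Hlast |].
  split; [intros d Hd; apply Hall; now right |].
  rewrite Hc; split; assumption.
Qed.

Lemma completion_completes i j L a b : (0 < z)%nat -> (0 < l)%nat ->
  completion (i, j) L a b -> completes i j a b.
Proof.
  intros Hz Hl; revert i j a b.
  induction L as [| c L IH]; intros i j a b HC.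
  - destruct HC as (_ & Hlast & Hall & Hmin & Hmax).
    cbn in Hlast; injection Hlast as -> ->.
    assert (Hnil : forall d : nat * nat, In d [] -> (S (pred l) <= snd d)%nat) by (intros d []).
    apply completes_end; [apply (Hall _ (or_introl eq_refl)) | lia | lia | |].
    + eapply covers_tail_next_row; [| exact Hnil | exact Hmin]; lia.
    + eapply covers_tail_next_row; [| exact Hnil | exact Hmax]; lia.
  - pose proof HC as ([Hstep _] & _ & Hall & _).
    assert (Hadm : admissible i j) by exact (Hall _ (or_introl eq_refl)).
    destruct (trav_step_cases _ _ Hstep) as [E | [E | E]]; cbn in E; subst c.
    + apply completes_right; [exact Hadm |].
      apply IH, completion_tail_same_row, HC.
    + destruct (completion_tail_next_row i j (i, S j) L a b Hl eq_refl HC) as (Ha & Hb & HC').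
      apply completes_up; auto.
    + destruct (completion_tail_next_row i j (S i, S j) L a b Hl eq_refl HC) as (Ha & Hb & HC').
      apply completes_diag; auto.
Qed.

Lemma profile_iff_admissible_covers T : (0 < l)%nat ->
  (forall d, In d T -> (snd d < l)%nat) ->
  is_profile x T l p <->
  (forall d, In d T -> admissible (fst d) (snd d)) /\
  covers T pmin 0 false /\ covers T pmax 0 false.
Proof.
  intros Hl Hrows; split.
  - intros [_ Hp]; split; [| split].
    + intros [i j] Hd; specialize (Hrows _ Hd); cbn in Hrows.
      destruct (Hp j Hrows) as [[_ Hmin] [_ Hmax]].
      split; [apply Hmin | apply Hmax]; exists i; split; auto.
    + intros j Hj _; destruct (Hp j ltac:(lia)) as [[[i [Hi V]] _] _].
      exists i; split; [exact Hi | symmetry; exact V].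
    + intros j Hj _; destruct (Hp j ltac:(lia)) as [_ [[i [Hi V]] _]].
      exists i; split; [exact Hi | symmetry; exact V].
  - intros (Hall & Hmin & Hmax); split; [reflexivity |].
    intros j Hj.
    destruct (Hmin j ltac:(lia) (fun _ => eq_refl)) as [i [Hi V]].
    destruct (Hmax j ltac:(lia) (fun _ => eq_refl)) as [i' [Hi' V']].
    split; split.
    + exists i; split; [exact Hi | symmetry; exact V].
    + intros y [k [Hk ->]]; apply (Hall _ Hk).
    + exists i'; split; [exact Hi' | symmetry; exact V'].
    + intros y [k [Hk ->]]; apply (Hall _ Hk).
Qed.

Lemma traversal_profile_iff_completes :
  (exists T, is_traversal z l T /\ is_profile x T l p) <-> completes 0 0 false false.
Proof.
  split.
  - intros [T [(Hz & Hl & HT) Hp]].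
    destruct T as [| c L]; [contradiction |]; destruct HT as (-> & Hst & Hlast).
    rewrite last_cons_default in Hlast.
    assert (Hrows : forall d, In d ((0%nat, 0%nat) :: L) -> (snd d < l)%nat).
    { intros d Hd; destruct (trav_steps_between _ _ d Hst Hd) as [_ [_ H]].
      rewrite Hlast in H; cbn in H; lia. }
    apply (profile_iff_admissible_covers _ Hl Hrows) in Hp as (Hall & Hmin & Hmax).
    apply (completion_completes _ _ L _ _ Hz Hl).
    exact (conj Hst (conj Hlast (conj Hall (conj Hmin Hmax)))).
  - intros H.
    destruct (completes_bounds _ _ _ _ H) as [Hz Hl].
    destruct (completes_completion _ _ _ _ H) as [L (Hst & Hlast & Hall & Hmin & Hmax)].
    exists ((0%nat, 0%nat) :: L); split.
    + split; [exact Hz |]; split; [exact Hl |].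
      split; [reflexivity |]; split; [exact Hst |].
      now rewrite last_cons_default.
    + apply profile_iff_admissible_covers; [exact Hl | | exact (conj Hall (conj Hmin Hmax))].
      intros d Hd; destruct (trav_steps_between _ _ d Hst Hd) as [_ [_ H']].
      rewrite Hlast in H'; cbn in H'; lia.
Qed.

Definition can_exit i j : Prop :=
  (S i = z /\ S j = l) \/ completes i (S j) false false \/ completes (S i) (S j) false false.

Lemma completes_unfold i j a b :
  completes i j a b <->
  admissible i j /\
  ((seen pmin a i j = true /\ seen pmax b i j = true /\ can_exit i j) \/
   completes (S i) j (seen pmin a i j) (seen pmax b i j)).
Proof.
  split.
  - intros H; inversion H; subst; unfold can_exit; tauto.
  - intros [Hadm [(Ha & Hb & [[Hi Hj] | [H | H]]) | H]].
    + now apply completes_end.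
    + now apply completes_up.
    + now apply completes_diag.
    + now apply completes_right.
Qed.

Local Notation exec := (exec x p).
Local Notation neval := (neval x p).
Local Notation beval := (beval x p).

Definition cell_ready i j s : Prop :=
  nvars s rI = i /\ nvars s rJ = j /\
  nvars s rHitMin = bit (Reqb (xval i) (pmin j)) /\ nvars s rHitMax = bit (Reqb (xval i) (pmax j)).

Definition table_ok (s : state) (D : nat -> nat -> bool -> bool -> Prop) : Prop :=
  forall i j a b, D i j a b -> (nmem s (addr j a b) i <> 0%nat <-> completes i j a b).

(* The entries known before cell (n-1, j) is filled.  Cells outside the grid
   count as known: there the memory holds 0 and [completes] fails. *)
Definition cells_done (j n : nat) : nat -> nat -> bool -> bool -> Prop :=
  fun i' j' _ _ => (j < j' \/ (j' = j /\ n <= i') \/ z <= i')%nat.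

Lemma admissible_test_correct i j s : cell_ready i j s ->
  (beval s admissible_test = true <-> admissible i j).
Proof.
  intros (Hi & Hj & _); cbn; rewrite Hi, Hj.
  unfold admissible, xval, pmin, pmax.
  destruct Rlt_dec, Rlt_dec; cbn; split; intros; try discriminate; lra.
Qed.

Lemma can_exit_test_correct i j s : cell_ready i j s -> table_ok s (cells_done j (S i)) ->
  (beval s can_exit_test = true <-> can_exit i j).
Proof.
  intros (Hi & Hj & _) T; unfold can_exit_test, can_exit.
  rewrite !beval_Bor, !Bool.orb_true_iff, !beval_nonzero, !neval_entry.
  cbn [beval neval nsucc]; rewrite Bool.andb_true_iff, !Nat.eqb_eq, Hi, Hj.
  rewrite <- (T i (S j) false false), <- (T (S i) (S j) false false) by (unfold cells_done; lia).
  idtac.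
  rewrite !Nat.add_1_r; reflexivity.
Qed.

Lemma completes_test_correct i j a b s : cell_ready i j s -> table_ok s (cells_done j (S i)) ->
  (beval s (completes_test a b) = true <-> completes i j a b).
Proof.
  intros Hready T; pose proof Hready as (Hi & Hj & Hmin & Hmax).
  rewrite completes_unfold; unfold completes_test.
  cbn [beval]; rewrite Bool.andb_true_iff, beval_Bor, Bool.orb_true_iff.
  cbn [beval]; rewrite !Bool.andb_true_iff.
  rewrite (admissible_test_correct _ _ _ Hready), (can_exit_test_correct _ _ _ Hready T).
  rewrite !beval_nonzero, neval_entry; cbn [neval nsucc].
  rewrite (neval_flag_or x p s a _ _ Hmin), (neval_flag_or x p s b _ _ Hmax), Hi, Hj.
  change (4 * j + _)%nat with (addr j (seen pmin a i j) (seen pmax b i j)).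
  rewrite Nat.add_1_r, (T (S i) j) by (unfold cells_done; lia).
  rewrite !bit_nonzero; unfold seen; tauto.
Qed.

Definition extend (D : nat -> nat -> bool -> bool -> Prop) i j a b :
  nat -> nat -> bool -> bool -> Prop :=
  fun i' j' a' b' => D i' j' a' b' \/ (i', j', a', b') = (i, j, a, b).

Lemma table_ok_weaken s D D' :
  table_ok s D -> (forall i j a b, D' i j a b -> D i j a b) -> table_ok s D'.
Proof. intros T Hsub i j a b Hd; apply T, Hsub, Hd. Qed.

Lemma table_ok_store s D i j a b v : table_ok s D -> (v <> 0%nat <-> completes i j a b) ->
  table_ok (set_nmem s (addr j a b) i v) (extend D i j a b).
Proof.
  intros T Hv i' j' a' b' Hd; unfold set_nmem, upd2; cbn [nmem].
  destruct (Nat.eqb_spec (addr j' a' b') (addr j a b)) as [Ea | Ea],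
           (Nat.eqb_spec i' i) as [-> | Ei];
    cbn [andb].
  1: apply addr_inj in Ea as (-> & -> & ->); exact Hv.
  all: destruct Hd as [Hd | E]; [now apply T | injection E; intros; subst; congruence].
Qed.

Lemma store_entry_correct i j a b s D : cell_ready i j s -> table_ok s D ->
  (forall i' j' a' b', cells_done j (S i) i' j' a' b' -> D i' j' a' b') ->
  exists s', exec s (store_entry a b) 2 s' /\ cell_ready i j s' /\ table_ok s' (extend D i j a b).
Proof.
  intros Hready T Hsub.
  eexists; split; [apply exec_store_flag | split; [exact Hready |]].
  pose proof Hready as (Hi & Hj & _).
  replace (neval s (NAdd (quad (NVar rJ)) (NConst (slot a b)))) with (addr j a b)
    by (cbn; unfold addr; lia).
  cbn [neval]; rewrite Hi.
  apply table_ok_store; [exact T |].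
  rewrite bit_nonzero; apply completes_test_correct;
    [exact Hready | exact (table_ok_weaken _ _ _ T Hsub)].
Qed.

Lemma fill_cell_correct i j s :
  nvars s rI = i -> nvars s rJ = j -> table_ok s (cells_done j (S i)) ->
  exists s', exec s fill_cell 12 s' /\
    nvars s' rI = i /\ nvars s' rJ = j /\ table_ok s' (cells_done j i).
Proof.
  intros Hi Hj T.
  pose proof (exec_set_flag x p s rHitMin (BEqR (RX (NVar rI)) (RPmin (NVar rJ)))) as E1.
  set (s1 := set_nvar s rHitMin _) in E1.
  pose proof (exec_set_flag x p s1 rHitMax (BEqR (RX (NVar rI)) (RPmax (NVar rJ)))) as E2.
  set (s2 := set_nvar s1 rHitMax _) in E2.
  assert (Hready : cell_ready i j s2)
    by (unfold cell_ready, s2, s1, set_nvar; cbn; rewrite Hi, Hj; repeat split).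
  edestruct (store_entry_correct i j false false) as (s3 & E3 & R3 & T3);
    [exact Hready | exact T | now intros |].
  edestruct (store_entry_correct i j false true) as (s4 & E4 & R4 & T4);
    [exact R3 | exact T3 | intros; now left |].
  edestruct (store_entry_correct i j true false) as (s5 & E5 & R5 & T5);
    [exact R4 | exact T4 | intros; now do 2 left |].
  edestruct (store_entry_correct i j true true) as (s6 & E6 & R6 & T6);
    [exact R5 | exact T5 | intros; now do 3 left |].
  exists s6; split; [| split; [apply R6 | split; [apply R6 |]]].
  - change 12%nat with (2 + (2 + (2 + (2 + (2 + 2)))))%nat.
    apply ExSeq with s1; [exact E1 |]. apply ExSeq with s2; [exact E2 |].
    apply ExSeq with s3; [exact E3 |]. apply ExSeq with s4; [exact E4 |].
    apply ExSeq with s5; [exact E5 | exact E6].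
  - apply (table_ok_weaken _ _ _ T6); intros i' j' a b Hc.
    assert (Hnew : cells_done j (S i) i' j' a b \/ (i' = i /\ j' = j))
      by (unfold cells_done in *; lia).
    destruct Hnew as [Hold | [-> ->]]; unfold extend; [now do 4 left |].
    destruct a, b; auto 6.
Qed.

Lemma fill_row_correct j s : nvars s rI = z -> nvars s rJ = j -> table_ok s (cells_done j z) ->
  exists s', exec s fill_row (z * 14 + 1) s' /\ nvars s' rJ = j /\ table_ok s' (cells_done j 0).
Proof.
  intros Hi Hj T.
  edestruct (exec_countdown x p rI fill_cell 12
                            (fun n t => nvars t rJ = j /\ table_ok t (cells_done j n)))
    as (s' & E & Hj' & T'); [| split; [exact Hj | exact T] | exact Hi |].
  - intros n t [Ht Tt].
    destruct (fill_cell_correct n j (set_nvar t rI n)) as (t' & E' & Hi' & Hj' & T');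
      [reflexivity | exact Ht | exact Tt |].
    exists t'; auto.
  - exists s'; auto.
Qed.

Definition rows_done (m : nat) : nat -> nat -> bool -> bool -> Prop :=
  fun i' j' _ _ => (m <= j' \/ z <= i')%nat.

Lemma fill_table_correct s : nvars s rJ = l -> table_ok s (rows_done l) ->
  exists s', exec s fill_table (l * (z * 14 + 4) + 1) s' /\ table_ok s' (rows_done 0).
Proof.
  intros Hj T.
  edestruct (exec_countdown x p rJ (CSeq (CNAsgn rI NLenX) fill_row) (z * 14 + 2)
                            (fun m t => table_ok t (rows_done m)))
    as (s' & E & T'); [| exact T | exact Hj |].
  - intros m t Tt.
    set (t1 := set_nvar (set_nvar t rJ m) rI z).
    destruct (fill_row_correct m t1) as (t' & E' & Hj' & T'); [reflexivity | reflexivity | |].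
    { apply (table_ok_weaken _ _ _ Tt); unfold cells_done, rows_done; intros; lia. }
    exists t'; split; [| split; [| exact Hj']].
    + replace (z * 14 + 2)%nat with (1 + (z * 14 + 1))%nat by lia.
      apply ExSeq with t1; [apply ExNAsgn | exact E'].
    + apply (table_ok_weaken _ _ _ T'); unfold cells_done, rows_done; intros; lia.
  - exists s'; split; [| exact T'].
    replace (l * (z * 14 + 4))%nat with (l * S (S (z * 14 + 2)))%nat by lia; exact E.
Qed.

Lemma profile_checker_correct :
  exists k s', exec init_state profile_checker k s' /\ (k <= 18 * (z * l) + 18)%nat /\
    (output s' = true <-> completes 0 0 false false).
Proof.
  destruct (Nat.ltb_spec 0 z) as [Hz | Hz].
  - set (s0 := set_nvar init_state rJ l).
    destruct (fill_table_correct s0) as (s1 & E1 & T1); [reflexivity | |].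
    { intros i j a b Hd; cbn; split; [congruence |].
      intros H; apply completes_bounds in H; unfold rows_done in Hd; lia. }
    exists (S (1 + (l * (z * 14 + 4) + 1 + 1)))%nat.
    exists (set_nvar s1 0%nat (neval s1 (entry (NConst 0) (NConst 0) (NConst 0)))).
    split; [| split; [nia |]].
    + apply ExIfT; [now apply Nat.ltb_lt |].
      apply ExSeq with s0; [apply ExNAsgn |].
      apply ExSeq with s1; [exact E1 | apply ExNAsgn].
    + unfold output; cbn.
      rewrite Bool.negb_true_iff, Nat.eqb_neq.
      apply (T1 0%nat 0%nat false false); unfold rows_done; lia.
  - exists 2%nat, init_state; split; [| split; [lia |]].
    + apply ExIfF; [now apply Nat.ltb_ge | constructor].
    + split; [discriminate | intros H; apply completes_bounds in H; lia].
Qed.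

End Correctness.

Theorem lemma9p16 :
  exists (prog : cmd) (C : nat),
    forall (x : list R) (p : list (R * R)),
      (forall j, (j < length p)%nat ->
         set_of x (fst (nth j p (0%R, 0%R))) /\
         set_of x (snd (nth j p (0%R, 0%R)))) ->
      exists (k : nat) (s' : state),
        exec x p init_state prog k s' /\
        (k <= C * (length x * length p) + C)%nat /\
        (output s' = true <->
         exists T, is_traversal (length x) (length p) T /\
                   is_profile x T (length p) p).
Proof.
  (* The entries of p need not lie in set(x). *)
  exists profile_checker, 18%nat; intros x p _.
  destruct (profile_checker_correct x p) as (k & s' & Hexec & Hcost & Hout).
  exists k, s'; split; [exact Hexec | split; [exact Hcost |]].
  rewrite Hout; symmetry; apply traversal_profile_iff_completes.
Qed.
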